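(* Let $(X,d)$ be a metric space, $\lambda\ge0$, $\ell:X\to[0,+\infty)$ lower semicontinuous with $\inf_X\ell=0$, and let $u:X\to\mathbb{R}$ satisfy $\inf_Xu=0$. Then for every $x\in X$, \[T^\infty u(x)=\sup\{v(x): v \text{ is a subsolution of } (\mathcal{G}_\lambda) \text{ and } v\le u\}.\] In particular, if $u$ is a supersolution of $(\mathcal{G}_\lambda)$, then $T^\infty u(x)=\sup\{v(x): v\text{ is a solution of }(\mathcal{G}_\lambda)\text{ and }v\le u\}$ for all $x\in X$.
   Context: Global slope: $G[u](x)=\sup_{y\neq x}\frac{(u(x)-u(y))_+}{d(x,y)}$ if $u(x)<+\infty$, $G[u](x)=+\infty$ otherwise. For $(\mathcal{G}_\lambda)$: a subsolution is $u:X\to\mathbb{R}\cup\{+\infty\}$ with $\inf_Xu=0$ and $\lambda u+G[u]\le\ell$ on $X$; a supersolution is a lower semicontinuous $v$ with $\inf_Xv=0$ and $\lambda v+G[v]\ge\ell$ on $X$; a solution is a lower semicontinuous function that is both. For $u:X\to[0,+\infty]$, $Tu(x)=\inf_{y\in X}\frac{u(y)+\ell(x)d(x,y)}{1+\lambda d(x,y)}$, and $T^\infty u(x)=\lim_{n\to\infty}T^nu(x)$ (a nonincreasing limit). *)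

From HB Require Import structures.
From mathcomp Require Import all_boot all_order all_algebra.
From mathcomp Require Import all_classical all_reals all_analysis.
Set Implicit Arguments. Unset Strict Implicit. Unset Printing Implicit Defensive.
Import Order.TTheory GRing.Theory Num.Theory.
Local Open Scope classical_set_scope.
Local Open Scope ring_scope.

Section Defs.
Context {R : realType} {X : Type}.

Definition is_metric (d : X -> X -> R) : Prop :=
  [/\ (forall x y, 0 <= d x y),
      (forall x y, d x y = 0 <-> x = y),
      (forall x y, d x y = d y x) &
      (forall x y z, d x z <= d x y + d y z)].

Definition lsc (d : X -> X -> R) (f : X -> \bar R) : Prop :=
  forall x (a : \bar R), (a < f x)%E ->
    exists2 delta : R, 0 < delta & forall y, d x y < delta -> (a < f y)%E.

Definition einf (f : X -> \bar R) : \bar R := ereal_inf (range f).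

Definition gslope (d : X -> X -> R) (u : X -> \bar R) (x : X) : \bar R :=
  if u x == +oo%E then +oo%E
  else ereal_sup ([set 0%E] `|`
         [set (maxe (u x - u y) 0 * ((d x y)^-1)%:E)%E | y in [set y | y <> x]]).

Definition subsolution (d : X -> X -> R) (lam : R) (l : X -> R)
    (u : X -> \bar R) : Prop :=
  einf u = 0%E /\ forall x, (lam%:E * u x + gslope d u x <= (l x)%:E)%E.

Definition supersolution (d : X -> X -> R) (lam : R) (l : X -> R)
    (v : X -> \bar R) : Prop :=
  [/\ lsc d v, einf v = 0%E & forall x, ((l x)%:E <= lam%:E * v x + gslope d v x)%E].

Definition solution (d : X -> X -> R) (lam : R) (l : X -> R)
    (v : X -> \bar R) : Prop :=
  subsolution d lam l v /\ supersolution d lam l v.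

Definition Top (d : X -> X -> R) (lam : R) (l : X -> R)
    (u : X -> \bar R) (x : X) : \bar R :=
  ereal_inf [set ((u y + (l x * d x y)%:E) * ((1 + lam * d x y)^-1)%:E)%E
             | y in [set: X]].

Definition Tinf (d : X -> X -> R) (lam : R) (l : X -> R)
    (u : X -> \bar R) (x : X) : \bar R :=
  limn (fun n => iter n (Top d lam l) u x).

End Defs.

From HB Require Import structures.
From mathcomp Require Import all_boot all_order all_algebra.
From mathcomp Require Import all_classical all_reals all_analysis.
From mathcomp Require Import lra.
Set Implicit Arguments. Unset Strict Implicit. Unset Printing Implicit Defensive.
Import Order.TTheory GRing.Theory Num.Theory.
Local Open Scope classical_set_scope.
Local Open Scope ring_scope.

(* Subsolutions are finite, and
   they are exactly the nonnegative functions v with inf v = 0, lam v <= l and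
   (1 + lam d(x,y)) v(x) <= v(y) + l(x) d(x,y), i.e. v <= T v; since T is
   monotone, every subsolution below u stays below each T^n u, hence below
   T^oo u.  Conversely that inequality passes to the limit of the decreasing
   iterates, and inf T^oo u = 0 then forces lam T^oo u <= l, so T^oo u is itself
   a subsolution below u.
   If u is a supersolution, T^oo u is a solution by Perron's argument: where
   T^oo u = u, its slope dominates that of u; where T^oo u < u and the
   supersolution inequality failed at x0, the maximum of T^oo u and a small
   cone T^oo u(x0) + delta - c d(x0, .) would be a larger subsolution below u. *)

Section MaximalSubsolution.
Variables (R : realType) (X : Type) (d : X -> X -> R) (lam : R) (l : X -> R).
Hypothesis metric_d : is_metric d.
Hypothesis lam_ge0 : 0 <= lam.
Hypothesis l_ge0 : forall x, 0 <= l x.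

Lemma metric_ge0 x y : 0 <= d x y.
Proof. by case: metric_d. Qed.

Lemma metric_xx x : d x x = 0.
Proof. by case: metric_d => _ dP _ _; apply/dP. Qed.

Lemma metric_gt0 x y : y <> x -> 0 < d x y.
Proof.
case: metric_d => d_ge0 dP _ _ yx; rewrite lt_neqAle d_ge0 andbT.
by apply/eqP => /esym /dP xy; apply: yx.
Qed.

Lemma metric_triangle x y z : d x z <= d x y + d y z.
Proof. by case: metric_d. Qed.

Lemma Tr_denom_gt0 x y : 0 < 1 + lam * d x y.
Proof. by rewrite ltr_pwDl // mulr_ge0 // metric_ge0. Qed.

Lemma einf0_ge0 (f : X -> \bar R) x : einf f = 0%E -> (0 <= f x)%E.
Proof. by move=> <-; apply: ereal_inf_lbound; exists x. Qed.

Lemma einf0_le (f g : X -> \bar R) :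
  (forall x, 0 <= f x <= g x)%E -> einf g = 0%E -> einf f = 0%E.
Proof.
move=> fg g0; apply/eqP; rewrite eq_le; apply/andP; split.
  rewrite -g0; apply: le_ereal_inf_tmp => _ [x _ <-].
  by apply: le_trans (ereal_inf_lbound _) _; [exists x|case/andP: (fg x)].
by apply: le_ereal_inf_tmp => _ [x _ <-]; case/andP: (fg x).
Qed.

Lemma gslopeE (V : X -> R) x :
  gslope d (fun y => (V y)%:E) x = ereal_sup ([set 0%E] `|`
    [set (Num.max (V x - V y) 0 / d x y)%:E | y in [set y | y <> x]]).
Proof.
rewrite /gslope /=; congr (ereal_sup (_ `|` _)); apply: eq_imagel => y _.
by rewrite -EFinB -EFin_max -EFinM.
Qed.

Lemma gslope_le_EFin (V : X -> R) x g :
  (gslope d (fun y => (V y)%:E) x <= g%:E)%E <->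
  0 <= g /\ forall y, V x - V y <= g * d x y.
Proof.
rewrite gslopeE; split.
- move=> slope_le; split.
    by rewrite -lee_fin (le_trans _ slope_le) //; apply: ereal_sup_ubound; left.
  move=> y; have [->|yx] := pselect (y = x); first by rewrite metric_xx mulr0 subrr.
  have : ((Num.max (V x - V y) 0 / d x y)%:E <= g%:E)%E.
    by apply: le_trans slope_le; apply: ereal_sup_ubound; right; exists y.
  by rewrite lee_fin ler_pdivrMr ?metric_gt0 //; apply: le_trans; rewrite le_max lexx.
- case=> g0 Vlip; apply: ge_ereal_sup => _ [->|[y /= yx <-]]; first by rewrite lee_fin.
  by rewrite lee_fin ler_pdivrMr ?metric_gt0 // ge_max Vlip mulr_ge0 ?metric_ge0.
Qed.

Lemma gslope_le_contact (U V : X -> R) x :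
  (forall y, V y <= U y) -> V x = U x ->
  (gslope d (fun y => (U y)%:E) x <= gslope d (fun y => (V y)%:E) x)%E.
Proof.
move=> VU VUx; rewrite !gslopeE; apply: ge_ereal_sup => _ [->|[y yx <-]].
  by apply: ereal_sup_ubound; left.
apply: le_trans (ereal_sup_ubound _); last by right; exists y.
rewrite lee_fin ler_wpM2r ?invr_ge0 ?metric_ge0 // le_max2 //.
by rewrite VUx lerD2l lerN2.
Qed.

(* [0 <= V] and [G[V] <= l - lam V], the slope bound being multiplied out *)
Definition real_subsolution (V : X -> R) : Prop :=
  [/\ forall x, 0 <= V x, forall x, lam * V x <= l x &
      forall x y, (1 + lam * d x y) * V x <= V y + l x * d x y].

Lemma subsolution_ineqP (V : X -> R) x :
  (lam%:E * (V x)%:E + gslope d (fun y => (V y)%:E) x <= (l x)%:E)%E <->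
  lam * V x <= l x /\ forall y, (1 + lam * d x y) * V x <= V y + l x * d x y.
Proof.
rewrite -EFinM -leeBrDl // -EFinB gslope_le_EFin subr_ge0.
by split=> -[lamV Vlip]; split=> // y; have := Vlip y; lra.
Qed.

Lemma subsolution_EFinP (V : X -> R) :
  subsolution d lam l (fun y => (V y)%:E) <->
  einf (fun y => (V y)%:E) = 0%E /\ real_subsolution V.
Proof.
split=> -[V0 Vsub]; split=> //.
  split=> [x|x|x y]; first by rewrite -lee_fin; exact: einf0_ge0 V0.
    by case/subsolution_ineqP: (Vsub x).
  by case/subsolution_ineqP: (Vsub x) => _; apply.
by case: Vsub => _ lamV Vlip x; apply/subsolution_ineqP.
Qed.

Lemma subsolution_EFin (v : X -> \bar R) :
  subsolution d lam l v -> v = (fun y => (fine (v y))%:E).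
Proof.
case=> v0 vsub; apply: funext => x; rewrite fineK // ge0_fin_numE ?einf0_ge0 //.
rewrite ltNge leye_eq; apply/negP => /eqP vx; move: (vsub x).
rewrite /gslope vx eqxx addey ?leye_eq //.
by rewrite gt_eqF // (lt_le_trans _ (mule_ge0 _ _)) ?ltNye ?lee_fin.
Qed.

Lemma real_subsolution_lsc (V : X -> R) :
  real_subsolution V -> lsc d (fun y => (V y)%:E).
Proof.
case=> V0 _ Vlip x [a| |] aVx; last 2 first.
- by rewrite ltNge leey in aVx.
- by exists 1 => // y _; exact: ltNyr.
rewrite lte_fin in aVx; have l1_gt0 : 0 < l x + 1 by rewrite ltr_pwDr.
exists ((V x - a) / (l x + 1)); first by rewrite divr_gt0 // subr_gt0.
move=> y; rewrite ltr_pdivlMr // lte_fin => dxy.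
have := Vlip x y; have := metric_ge0 x y; have := l_ge0 x.
have : 0 <= lam * d x y * V x by rewrite !mulr_ge0 ?metric_ge0.
nra.
Qed.

Lemma real_subsolution_max (V phi : X -> R) (c : R) :
  real_subsolution V -> 0 <= c -> (forall z y, phi z <= phi y + c * d z y) ->
  (forall z, V z < phi z -> c + lam * phi z <= l z) ->
  real_subsolution (fun z => Num.max (V z) (phi z)).
Proof.
case=> V0 lamV Vlip c0 phi_lip phi_sub; split=> [z|z|z y] /=.
- by rewrite le_max V0.
- have [_|Vphi] := leP (phi z) (V z); first exact: lamV.
  by have := phi_sub z Vphi; lra.
- have Vmax : V y <= Num.max (V y) (phi y) by rewrite le_max lexx.
  have phimax : phi y <= Num.max (V y) (phi y) by rewrite le_max lexx orbT.
  have [_|Vphi] := leP (phi z) (V z); first by have := Vlip z y; lra.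
  have := phi_sub z Vphi; have := phi_lip z y.
  have := metric_ge0 z y; nra.
Qed.

Lemma lam_le_of_step (V : X -> R) x :
  einf (fun y => (V y)%:E) = 0%E ->
  (forall y, (1 + lam * d x y) * V x <= V y + l x * d x y) -> lam * V x <= l x.
Proof.
move=> V0 Vlip; apply/ler_addgt0Pr => e e0.
have [->|lam_neq0] := eqVneq lam 0; first by rewrite mul0r addr_ge0 ?l_ge0 ?ltW.
have lam_gt0 : 0 < lam by rewrite lt_neqAle eq_sym lam_neq0.
have : (einf (fun y => (V y)%:E) < (e / lam)%:E)%E by rewrite V0 lte_fin divr_gt0.
case/ereal_inf_lt => _ [y _ <-]; rewrite lte_fin ltr_pdivlMr // mulrC => lamVy.
rewrite leNgt; apply/negP => lamVx.
have := ler_wpM2l (ltW lam_gt0) (Vlip y); have := metric_ge0 x y; have := l_ge0 x.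
have : 0 <= lam * d x y * (lam * V x - (l x + e)).
  by rewrite !mulr_ge0 ?metric_ge0 ?ltW // subr_gt0.
nra.
Qed.

Lemma real_subsolution_bump (W u : X -> R) x0 g :
  lsc d (fun x => (l x)%:E) -> lsc d (fun x => (u x)%:E) ->
  real_subsolution W -> (forall x, W x <= u x) -> W x0 < u x0 ->
  0 <= g -> (forall y, W x0 - W y <= g * d x0 y) -> lam * W x0 + g < l x0 ->
  exists V, [/\ real_subsolution V, forall x, V x <= u x & W x0 < V x0].
Proof.
move=> lsc_l lsc_u Wsub Wu Wu0 g0 Wlip Wl0; set a := W x0 in Wu0 Wlip Wl0 *.
pose eta := (l x0 - lam * a - g) / 3.
have etaE : l x0 = lam * a + g + 3 * eta by rewrite /eta; lra.
have eta_gt0 : 0 < eta by rewrite /eta; lra.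
have [|rl rl_gt0 l_near] := lsc_l x0 ((l x0 - eta)%:E); first by rewrite lte_fin; lra.
have [|ru ru_gt0 u_near] := lsc_u x0 (((a + u x0) / 2)%:E).
  by rewrite lte_fin; lra.
pose r := Num.min (Num.min rl ru) (lam + 1)^-1.
have r_gt0 : 0 < r by rewrite !lt_min rl_gt0 ru_gt0 invr_gt0 ltr_pwDr.
have lam_r : (lam + 1) * r <= 1.
  by rewrite -ler_pdivlMl ?ltr_pwDr // mulr1 !ge_min lexx orbT.
pose del := Num.min ((u x0 - a) / 2) (eta * r).
have del_gt0 : 0 < del by rewrite lt_min divr_gt0 ?subr_gt0 // mulr_gt0.
have del_u : del <= (u x0 - a) / 2 by rewrite ge_min lexx.
have del_r : del <= eta * r by rewrite ge_min lexx orbT.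
have lam_del : lam * del <= eta by nra.
pose c := g + eta; have c_ge0 : 0 <= c by rewrite addr_ge0 // ltW.
(* The cone [phi] exceeds [W] only where [eta * d x0 z < del], i.e. close to [x0],
   where lower semicontinuity keeps [l] above [l x0 - eta] and [u] above [phi]. *)
pose phi z := a + del - c * d x0 z.
have phi_le z : phi z <= a + del.
  by have := mulr_ge0 c_ge0 (metric_ge0 x0 z); rewrite /phi; lra.
have active_near z : W z < phi z -> d x0 z < rl /\ d x0 z < ru.
  move=> Wphi; have : eta * d x0 z < eta * r.
    by have := Wlip z; rewrite /phi /c in Wphi; lra.
  rewrite ltr_pM2l // => dr.
  by split; apply: lt_le_trans dr _; rewrite !ge_min lexx ?orbT.
exists (fun z => Num.max (W z) (phi z)); split.
- apply: (real_subsolution_max Wsub c_ge0) => [z y|z /active_near [dl _]].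
    by have := ler_wpM2l c_ge0 (metric_triangle x0 z y); rewrite /phi; lra.
  have := l_near z dl; rewrite lte_fin => lz.
  by have := ler_wpM2l lam_ge0 (phi_le z); rewrite /c; lra.
- move=> z /=; rewrite ge_max Wu /=; have [/active_near [_ dz]|] := ltP (W z) (phi z).
    by have := u_near z dz; rewrite lte_fin => uz; have := phi_le z; lra.
  by move/le_trans; apply.
- by rewrite /= /phi metric_xx mulr0 subr0 lt_max ltr_pwDr ?orbT.
Qed.

Lemma maximal_real_subsolution_super (W u : X -> R) x0 :
  lsc d (fun x => (l x)%:E) -> lsc d (fun x => (u x)%:E) ->
  real_subsolution W -> (forall x, W x <= u x) ->
  (forall V, real_subsolution V -> (forall x, V x <= u x) -> forall x, V x <= W x) ->
  W x0 < u x0 ->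
  ((l x0)%:E <= lam%:E * (W x0)%:E + gslope d (fun y => (W y)%:E) x0)%E.
Proof.
move=> lsc_l lsc_u Wsub Wu Wmax Wu0; rewrite leNgt; apply/negP.
set G := gslope _ _ _; rewrite -EFinM => slope_lt.
have G_ge0 : (0 <= G)%E by rewrite /G gslopeE; apply: ereal_sup_ubound; left.
have G_fin : G \is a fin_num.
  rewrite ge0_fin_numE // (lt_trans _ (ltry (l x0 - lam * W x0))) //.
  by rewrite EFinB lteBrDl.
have [g0 Wlip] : 0 <= fine G /\ forall y, W x0 - W y <= fine G * d x0 y.
  by apply/gslope_le_EFin; rewrite fineK.
have [|V [Vsub Vu WV]] := real_subsolution_bump lsc_l lsc_u Wsub Wu Wu0 g0 Wlip.
  by rewrite -lte_fin EFinD fineK.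
by have := Wmax V Vsub Vu x0; rewrite leNgt WV.
Qed.

Definition Tr (v : X -> R) (x : X) : R :=
  inf [set (v y + l x * d x y) / (1 + lam * d x y) | y in [set: X]].

Lemma Tr_term_ge0 (v : X -> R) x y : (forall z, 0 <= v z) ->
  0 <= (v y + l x * d x y) / (1 + lam * d x y).
Proof. by move=> v0; rewrite divr_ge0 ?addr_ge0 ?mulr_ge0 ?v0 ?l_ge0 ?metric_ge0. Qed.

Lemma Tr_ge (v : X -> R) x b :
  (forall y, b <= (v y + l x * d x y) / (1 + lam * d x y)) -> b <= Tr v x.
Proof. by move=> vb; apply: lb_le_inf => [|_ [y _ <-]]; [eexists; exists x|]. Qed.

Lemma Tr_le (v : X -> R) x y : (forall z, 0 <= v z) ->
  Tr v x <= (v y + l x * d x y) / (1 + lam * d x y).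
Proof.
move=> v0; apply: ge_inf; last by exists y.
by exists 0 => /= _ [z _ <-]; exact: Tr_term_ge0.
Qed.

Lemma Tr_ge0 (v : X -> R) x : (forall z, 0 <= v z) -> 0 <= Tr v x.
Proof.
move=> v0; apply: Tr_ge => y.
exact: Tr_term_ge0.
Qed.

Lemma Tr_le_self (v : X -> R) x : (forall z, 0 <= v z) -> Tr v x <= v x.
Proof. by move/(Tr_le x x); rewrite metric_xx !mulr0 !addr0 divr1. Qed.

Lemma Top_EFin (v : X -> R) x : (forall z, 0 <= v z) ->
  Top d lam l (fun y => (v y)%:E) x = (Tr v x)%:E.
Proof.
move=> v0; rewrite /Top -ereal_inf_EFin.
- by rewrite image_comp; congr ereal_inf; apply: eq_imagel.
- by exists 0 => /= _ [z _ <-]; exact: Tr_term_ge0.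
- by eexists; exists x.
Qed.

Lemma real_subsolution_le_Tr (V v : X -> R) :
  real_subsolution V -> (forall y, V y <= v y) -> forall x, V x <= Tr v x.
Proof.
case=> _ _ Vlip Vv x; apply: Tr_ge => y.
by rewrite ler_pdivlMr ?Tr_denom_gt0 // mulrC (le_trans (Vlip x y)) // lerD2r.
Qed.

Section Iterates.
Variable u : X -> R.
Hypothesis u_ge0 : forall x, 0 <= u x.

Lemma iter_Tr_ge0 n x : 0 <= iter n Tr u x.
Proof. by elim: n x => [|n IHn] x /=; [exact: u_ge0|exact: Tr_ge0]. Qed.

Lemma iter_Top n :
  iter n (Top d lam l) (fun y => (u y)%:E) = (fun y => (iter n Tr u y)%:E).
Proof.
elim: n => //= n ->; apply: funext => y; exact/Top_EFin/iter_Tr_ge0.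
Qed.

Definition Tr_inf (x : X) : R := inf (range (fun n => iter n Tr u x)).

Lemma has_lbound_iter_Tr x : has_lbound (range (fun n => iter n Tr u x)).
Proof. by exists 0 => /= _ [n _ <-]; exact: iter_Tr_ge0. Qed.

Lemma Tr_inf_le n x : Tr_inf x <= iter n Tr u x.
Proof. by apply: ge_inf; [exact: has_lbound_iter_Tr|exists n]. Qed.

Lemma Tr_inf_le_u x : Tr_inf x <= u x.
Proof. exact: (Tr_inf_le 0). Qed.

Lemma Tr_inf_ge x b : (forall n, b <= iter n Tr u x) -> b <= Tr_inf x.
Proof. by move=> ub; apply: lb_le_inf => [|_ [n _ <-]]; [eexists; exists 0%N|]. Qed.

Lemma Tinf_EFin x : Tinf d lam l (fun y => (u y)%:E) x = (Tr_inf x)%:E.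
Proof.
rewrite /Tinf (_ : (fun n => _) = (fun n => (iter n Tr u x)%:E)); last first.
  by apply: funext => n; rewrite iter_Top.
rewrite (cvg_lim _ (ereal_nonincreasing_cvgn _)) //; last first.
  by apply/nonincreasing_seqP => n; rewrite lee_fin /=; exact/Tr_le_self/iter_Tr_ge0.
rewrite -(image_comp _ EFin) ereal_inf_EFin //; first exact: has_lbound_iter_Tr.
by eexists; exists 0%N.
Qed.

Lemma Tr_inf_ge0 x : 0 <= Tr_inf x.
Proof. by apply: Tr_inf_ge => n; exact: iter_Tr_ge0. Qed.

Lemma Tr_inf_step x y :
  (1 + lam * d x y) * Tr_inf x <= Tr_inf y + l x * d x y.
Proof.
rewrite -lerBlDr; apply: Tr_inf_ge => n; rewrite lerBlDr -ler_pdivlMl ?Tr_denom_gt0 //.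
by rewrite mulrC (le_trans (Tr_inf_le n.+1 x)) // Tr_le //; exact: iter_Tr_ge0.
Qed.

Lemma einf_Tr_inf : einf (fun x => (u x)%:E) = 0%E ->
  einf (fun x => (Tr_inf x)%:E) = 0%E.
Proof.
by apply: einf0_le => x; rewrite !lee_fin Tr_inf_ge0 (Tr_inf_le 0).
Qed.

Lemma Tr_inf_subsolution : einf (fun x => (u x)%:E) = 0%E ->
  real_subsolution Tr_inf.
Proof.
move=> u0; split=> [x|x|x y]; [exact: Tr_inf_ge0| |exact: Tr_inf_step].
by apply: lam_le_of_step; [exact: einf_Tr_inf|exact: Tr_inf_step].
Qed.

Lemma real_subsolution_le_Tr_inf V :
  real_subsolution V -> (forall x, V x <= u x) -> forall x, V x <= Tr_inf x.
Proof.
move=> Vsub Vu x; apply: Tr_inf_ge => n; elim: n x => [|n IHn] x //=.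
exact: real_subsolution_le_Tr.
Qed.

Lemma Tr_inf_EFin_subsolution : einf (fun x => (u x)%:E) = 0%E ->
  subsolution d lam l (fun x => (Tr_inf x)%:E).
Proof.
move=> u0; apply/subsolution_EFinP.
by split; [exact: einf_Tr_inf|exact: Tr_inf_subsolution].
Qed.

Lemma sup_subsolutions_le_Tr_inf (P : (X -> \bar R) -> Prop) x :
  (forall v, P v -> subsolution d lam l v) ->
  (ereal_sup [set v x | v in [set v | P v /\ forall y, (v y <= (u y)%:E)%E]]
    <= (Tr_inf x)%:E)%E.
Proof.
move=> Psub; apply: ge_ereal_sup => _ [v [/Psub vsub vu] <-].
have vE := subsolution_EFin vsub; move: vsub vu; rewrite vE.
case/subsolution_EFinP => _ Vsub vu; rewrite lee_fin.
by apply: real_subsolution_le_Tr_inf Vsub _ x => y; rewrite -lee_fin.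
Qed.

Lemma Tr_inf_supersolution :
  lsc d (fun x => (l x)%:E) -> einf (fun x => (u x)%:E) = 0%E ->
  supersolution d lam l (fun x => (u x)%:E) ->
  supersolution d lam l (fun x => (Tr_inf x)%:E).
Proof.
move=> lsc_l u0 [lsc_u _ usuper]; have Wsub := Tr_inf_subsolution u0.
split=> [|//|x]; [exact: real_subsolution_lsc|exact: einf_Tr_inf|].
have [Wu|uW] := ltP (Tr_inf x) (u x).
  apply: maximal_real_subsolution_super lsc_l lsc_u Wsub Tr_inf_le_u _ Wu.
  exact: real_subsolution_le_Tr_inf.
have Wu : Tr_inf x = u x by apply: le_anti; rewrite uW Tr_inf_le_u.
apply: le_trans (usuper x) _; rewrite Wu leeD2l //.
by apply: gslope_le_contact Wu => y; exact: Tr_inf_le_u.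
Qed.

Lemma Tinf_eq_sup_subsolutions x : einf (fun x => (u x)%:E) = 0%E ->
  Tinf d lam l (fun y => (u y)%:E) x =
  ereal_sup [set v x | v in [set v : X -> \bar R |
               subsolution d lam l v /\ forall y, (v y <= (u y)%:E)%E]].
Proof.
move=> u0; rewrite Tinf_EFin; apply/eqP.
rewrite eq_le sup_subsolutions_le_Tr_inf // andbT.
apply: ereal_sup_ubound; exists (fun y => (Tr_inf y)%:E) => //.
by split=> [|y]; [exact: Tr_inf_EFin_subsolution|rewrite lee_fin Tr_inf_le_u].
Qed.

Lemma Tinf_eq_sup_solutions x :
  lsc d (fun x => (l x)%:E) -> einf (fun x => (u x)%:E) = 0%E ->
  supersolution d lam l (fun x => (u x)%:E) ->
  Tinf d lam l (fun y => (u y)%:E) x =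
  ereal_sup [set v x | v in [set v : X -> \bar R |
               solution d lam l v /\ forall y, (v y <= (u y)%:E)%E]].
Proof.
move=> lsc_l u0 usuper; rewrite Tinf_EFin; apply/eqP; rewrite eq_le.
rewrite sup_subsolutions_le_Tr_inf => [|v []//]; rewrite andbT.
apply: ereal_sup_ubound; exists (fun y => (Tr_inf y)%:E) => //.
split=> [|y]; last by rewrite lee_fin Tr_inf_le_u.
by split; [exact: Tr_inf_EFin_subsolution|exact: Tr_inf_supersolution].
Qed.

End Iterates.
End MaximalSubsolution.

Theorem theorem4p5 (R : realType) (X : Type) (d : X -> X -> R)
  (lam : R) (l : X -> R) (u : X -> R) :
  is_metric d -> 0 <= lam ->
  (forall x, 0 <= l x) -> lsc d (fun x => (l x)%:E) ->
  einf (fun x => (l x)%:E) = 0%E ->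
  einf (fun x => (u x)%:E) = 0%E ->
  (forall x, Tinf d lam l (fun y => (u y)%:E) x =
     ereal_sup [set v x | v in [set v : X -> \bar R |
                  subsolution d lam l v /\ forall y, (v y <= (u y)%:E)%E]])
  /\
  (supersolution d lam l (fun y => (u y)%:E) ->
   forall x, Tinf d lam l (fun y => (u y)%:E) x =
     ereal_sup [set v x | v in [set v : X -> \bar R |
                  solution d lam l v /\ forall y, (v y <= (u y)%:E)%E]]).
Proof.
move=> metric_d lam_ge0 l_ge0 lsc_l _ u0.
have u_ge0 x : 0 <= u x by rewrite -lee_fin; exact: einf0_ge0 u0.
split=> [x|usuper x].
  exact: (Tinf_eq_sup_subsolutions metric_d lam_ge0 l_ge0 u_ge0 x u0).
exact: (Tinf_eq_sup_solutions metric_d lam_ge0 l_ge0 u_ge0 x lsc_l u0 usuper).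
Qed.
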